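(* Let $K$ be a field of characteristic $0$, let $S=K[x_1,\ldots,x_n]$ be graded by $\deg x_i=a_i>0$, and let $I\subsetneq S$ be a graded ideal which is strongly Golod, i.e. $\partial(I)^2\subseteq I$, where $\partial(I)$ is the ideal generated by all $\partial f/\partial x_i$ with $f\in I$, $1\le i\le n$. Then for each minimal prime ideal $P$ of $I$, the (uniquely determined) $P$-primary component $Q$ of $I$ is strongly Golod, i.e. $\partial(Q)^2\subseteq Q$. *)

From mathcomp Require Import all_boot all_algebra.
From mathcomp Require Import mpoly.
Set Implicit Arguments. Unset Strict Implicit. Unset Printing Implicit Defensive.
Import GRing.Theory.
Local Open Scope ring_scope.

Section Ideals.
Variables (K : fieldType) (n : nat).
Notation S := {mpoly K[n]}.
Definition pset := S -> Prop.

Definition subsetP (A B : pset) := forall f, A f -> B f.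
Definition eqset (A B : pset) := forall f, A f <-> B f.

Definition is_ideal (I : pset) : Prop :=
  I 0 /\ (forall f g, I f -> I g -> I (f + g)) /\ (forall f g, I g -> I (f * g)).

Definition ideal_gen (G : pset) : pset := fun f =>
  exists s : seq (S * S), (forall p, p \in s -> G p.2) /\
    f = \sum_(p <- s) p.1 * p.2.

Definition ideal_mul (I J : pset) : pset :=
  ideal_gen (fun h => exists f g, I f /\ J g /\ h = f * g).

Definition deriv_ideal (I : pset) : pset :=
  ideal_gen (fun h => exists f (i : 'I_n), I f /\ h = mderiv i f).

Definition strongly_golod (I : pset) : Prop :=
  subsetP (ideal_mul (deriv_ideal I) (deriv_ideal I)) I.

Definition radical (I : pset) : pset := fun f => exists k : nat, I (f ^+ k).

Definition is_prime (P : pset) : Prop :=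
  is_ideal P /\ ~ P 1 /\ (forall f g, P (f * g) -> P f \/ P g).

Definition is_primary (Q : pset) : Prop :=
  is_ideal Q /\ ~ Q 1 /\ (forall f g, Q (f * g) -> Q f \/ radical Q g).

Definition minimal_prime (I P : pset) : Prop :=
  is_prime P /\ subsetP I P /\
  (forall P', is_prime P' -> subsetP I P' -> subsetP P' P -> subsetP P P').

Definition wdeg (a : 'I_n -> nat) (m : 'X_{1..n}) : nat := (\sum_(i < n) a i * m i)%N.

Definition hcomp (a : 'I_n -> nat) (d : nat) (f : S) : S :=
  \sum_(m <- msupp f | wdeg a m == d) f@_m *: 'X_[m].

Definition graded_ideal (a : 'I_n -> nat) (I : pset) : Prop :=
  is_ideal I /\ forall f d, I f -> I (hcomp a d f).

End Ideals.

From Pilot Require Import Defs.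
From mathcomp Require Import all_boot all_algebra.
From mathcomp Require Import mpoly.
From Stdlib Require Import Classical.
From mathcomp Require Import ring zify.
Set Implicit Arguments. Unset Strict Implicit. Unset Printing Implicit Defensive.
Local Open Scope ring_scope.
Import GRing.Theory.

(* If f lies in the P-primary component Q of I = Q_1 /\ ... /\ Q_m,
   then s f lies in I for some s outside P, namely a product of elements of the
   other components chosen outside P; these exist because P is minimal over I
   and the radicals of the components are distinct.  For f, g in Q with s f and
   t g in I, the Leibniz rule writes s t (d_i f)(d_k g) as (d_i (s f))(d_k (t g)),
   which lies in I, plus terms that are multiples of f or g, so it lies in Q.
   Since s t is not in P = rad Q and Q is primary, (d_i f)(d_k g) lies in Q. *)

Section StronglyGolodComponent.
Variables (K : fieldType) (n : nat).
Notation S := {mpoly K[n]}.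
Notation pset := (pset K n).

Section IdealLemmas.
Variables (Q : pset) (Qideal : is_ideal Q).

Lemma ideal0 : Q 0.
Proof. by case: Qideal. Qed.

Lemma idealD f g : Q f -> Q g -> Q (f + g).
Proof. by case: Qideal => _ [QD _]; apply: QD. Qed.

Lemma idealMl f g : Q g -> Q (f * g).
Proof. by case: Qideal => _ [_ QM]; apply: QM. Qed.

Lemma idealMr f g : Q f -> Q (f * g).
Proof. by rewrite mulrC; apply: idealMl. Qed.

Lemma idealB f g : Q f -> Q g -> Q (f - g).
Proof. by move=> Qf Qg; apply: idealD => //; rewrite -mulN1r; apply: idealMl. Qed.

Lemma ideal_sum (T : eqType) (s : seq T) (F : T -> S) :
  (forall x, x \in s -> Q (F x)) -> Q (\sum_(x <- s) F x).
Proof.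
elim: s => [|x s IHs] QF; first by rewrite big_nil; apply: ideal0.
rewrite big_cons; apply: idealD; first by apply: QF; rewrite inE eqxx.
by apply: IHs => y ys; apply: QF; rewrite inE ys orbT.
Qed.

Lemma ideal_gen_min (G : pset) : Defs.subsetP G Q -> Defs.subsetP (ideal_gen G) Q.
Proof.
move=> GQ _ [s [Gs ->]]; apply: ideal_sum => p ps.
by apply: idealMl; apply: GQ; apply: Gs.
Qed.

Lemma ideal_gen_mul (G H : pset) :
  (forall x y, G x -> H y -> Q (x * y)) ->
  forall x y, ideal_gen G x -> ideal_gen H y -> Q (x * y).
Proof.
move=> GHQ _ _ [s [Gs ->]] [t [Ht ->]].
rewrite big_distrl; apply: ideal_sum => p ps; rewrite big_distrr.
apply: ideal_sum => q qs; rewrite /= mulrACA; apply: idealMl.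
by apply: GHQ; [apply: Gs | apply: Ht].
Qed.

End IdealLemmas.

Lemma ideal_gen_mem (G : pset) f : G f -> ideal_gen G f.
Proof.
move=> Gf; exists [:: (1, f)]; split; last by rewrite big_seq1 mul1r.
by move=> p; rewrite inE => /eqP ->.
Qed.

Lemma strongly_golod_derivM (I : pset) f g (i k : 'I_n) :
  strongly_golod I -> I f -> I g -> I (mderiv i f * mderiv k g).
Proof.
move=> sgI If Ig; apply/sgI/(@ideal_gen_mem _ (mderiv i f * mderiv k g)).
exists (mderiv i f), (mderiv k g); split; [|split=> //].
  by apply: (@ideal_gen_mem _ (mderiv i f)); exists f, i.
by apply: (@ideal_gen_mem _ (mderiv k g)); exists g, k.
Qed.

Lemma derivM_strongly_golod (Q : pset) : is_ideal Q ->
  (forall f g (i k : 'I_n), Q f -> Q g -> Q (mderiv i f * mderiv k g)) ->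
  strongly_golod Q.
Proof.
move=> Qideal QdM; apply: ideal_gen_min => // _ [x [y [dx [dy ->]]]].
move: dx dy; apply: ideal_gen_mul => // _ _ [f [i [Qf ->]]] [g [k [Qg ->]]].
exact: QdM.
Qed.

Lemma prime_exp (P : pset) x l : is_prime P -> P (x ^+ l) -> P x.
Proof.
move=> [_ [P1 Pmul]]; elim: l => [|l IHl]; first by rewrite expr0 => /P1.
by rewrite exprS => /Pmul [].
Qed.

Lemma prime_prod_notin (P : pset) (I : finType) (r : pred I) (u : I -> S) :
  is_prime P -> (forall k, r k -> ~ P (u k)) -> ~ P (\prod_(k | r k) u k).
Proof.
move=> [_ [P1 Pmul]]; apply: (big_ind (fun x => ~ P x)) => // x y nPx nPy.
by case/Pmul.
Qed.

Lemma radical_sub_prime (Q P : pset) :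
  is_prime P -> Defs.subsetP Q P -> Defs.subsetP (radical Q) P.
Proof. by move=> Pprime QP x [l /QP]; apply: prime_exp. Qed.

Lemma radical_primary_prime (Q : pset) : is_primary Q -> is_prime (radical Q).
Proof.
move=> [Qideal [Q1 Qprim]].
split; [split; [|split] | split].
- by exists 1%N; rewrite expr1; apply: ideal0.
- (* each binomial term of (f + g)^(a + b) has f^a or g^b as a factor *)
  move=> f g [a Qfa] [b Qgb]; exists (a + b)%N; rewrite exprDn.
  apply: ideal_sum => // i _; rewrite -mulr_natl; apply: idealMl => //.
  have [ai|ia] := leqP a (a + b - i).
    by apply: idealMr => //; rewrite -(subnK ai) exprD; apply: idealMl.
  have bi : (b <= i)%N by move: (ltn_ord i) ia; rewrite ltnS; lia.
  by apply: idealMl => //; rewrite -(subnK bi) exprD; apply: idealMl.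
- by move=> f g [k Qgk]; exists k; rewrite exprMn; apply: idealMl.
- by move=> [k]; rewrite expr1n.
- move=> f g [k]; rewrite exprMn => /Qprim [Qfk|[l Qgkl]]; first by left; exists k.
  by right; exists (k * l)%N; rewrite exprM.
Qed.

(* Leibniz rule, rearranged so that every term but the first is a multiple of f or g. *)
Lemma mul_derivM (s t f g : S) (i k : 'I_n) :
  mderiv i f * mderiv k g * (s * t) =
  mderiv i (s * f) * mderiv k (t * g)
  - (mderiv i s * f * mderiv k (t * g) + s * mderiv i f * (mderiv k t * g)).
Proof. by rewrite !mderivM; ring. Qed.

Lemma strongly_golod_saturation (I Q : pset) :
  is_primary Q -> strongly_golod I -> Defs.subsetP I Q ->
  (forall f, Q f -> exists2 s, ~ radical Q s & I (s * f)) ->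
  strongly_golod Q.
Proof.
move=> Qprimary sgI IQ satQ; have [Qideal [_ Qprim]] := Qprimary.
have [_ [_ radQmul]] := radical_primary_prime Qprimary.
apply: derivM_strongly_golod => // f g i k Qf Qg.
have [s nRs Isf] := satQ f Qf; have [t nRt Itg] := satQ g Qg.
have Qst : Q (mderiv i f * mderiv k g * (s * t)).
  rewrite mul_derivM; apply: (idealB Qideal).
    by apply: IQ; apply: strongly_golod_derivM.
  apply: (idealD Qideal); first by apply: (idealMr Qideal); apply: (idealMl Qideal).
  by apply: (idealMl Qideal); apply: (idealMl Qideal).
by have [// | /radQmul []] := Qprim _ _ Qst.
Qed.

Lemma minimal_prime_radical (I P Q : pset) :
  minimal_prime I P -> is_primary Q -> Defs.subsetP I Q -> Defs.subsetP Q P ->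
  eqset (radical Q) P.
Proof.
move=> [Pprime [_ Pmin]] Qprimary IQ QP.
have radQP := radical_sub_prime Pprime QP.
have PradQ : Defs.subsetP P (radical Q).
  apply: Pmin radQP; first exact: radical_primary_prime.
  by move=> x /IQ Qx; exists 1%N; rewrite expr1.
by move=> x; split; [apply: radQP | apply: PradQ].
Qed.

Section PrimaryDecomposition.
Variables (I P : pset) (m : nat) (Qs : 'I_m -> pset).
Hypotheses (Pminimal : minimal_prime I P) (Qsprimary : forall j, is_primary (Qs j)).
Hypotheses (Idec : eqset I (fun f => forall j, Qs j f))
  (Qsirred : forall j k, j != k -> ~ eqset (radical (Qs j)) (radical (Qs k))).
Variable (j : 'I_m).
Hypothesis (radQjP : eqset (radical (Qs j)) P).

Lemma component_notin_prime k : k != j -> exists2 u, Qs k u & ~ P u.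
Proof.
move=> kj; apply: NNPP => noU; apply: (Qsirred kj) => x.
suff radQkP : eqset (radical (Qs k)) P by rewrite radQkP radQjP.
apply: (minimal_prime_radical Pminimal (Qsprimary k)) => [f /Idec | u Qku]; first exact.
by apply: NNPP => nPu; apply: noU; exists u.
Qed.

Lemma primary_component_saturation f :
  Qs j f -> exists2 s, ~ P s & I (s * f).
Proof.
move=> Qjf; have [Pprime _] := Pminimal.
have /fin_all_exists [u Qu] : forall k : 'I_m, exists u, k != j -> Qs k u /\ ~ P u.
  move=> k; have [->|kj] := eqVneq k j; first by exists 0.
  by have [u Qku nPu] := component_notin_prime kj; exists u.
exists (\prod_(k | k != j) u k).
  by apply: prime_prod_notin => // k /Qu [].
apply/Idec => k; have [->|kj] := eqVneq k j; first exact: (idealMl (Qsprimary j).1).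
have [Qku _] := Qu k kj.
by rewrite (bigD1 k) //= -mulrA; apply: (idealMr (Qsprimary k).1).
Qed.

End PrimaryDecomposition.

End StronglyGolodComponent.

Theorem corollary2p3 (K : fieldType) (n : nat) (a : 'I_n -> nat)
    (I : {mpoly K[n]} -> Prop) :
  [pchar K] =i pred0 ->
  (forall i, (0 < a i)%N) ->
  graded_ideal a I -> ~ I 1 ->
  strongly_golod I ->
  forall (P : {mpoly K[n]} -> Prop), minimal_prime I P ->
  forall (m : nat) (Qs : 'I_m -> {mpoly K[n]} -> Prop),
    (forall j, is_primary (Qs j)) ->
    eqset I (fun f => forall j, Qs j f) ->
    (forall j k, j != k -> ~ eqset (radical (Qs j)) (radical (Qs k))) ->
    forall j, eqset (radical (Qs j)) P -> strongly_golod (Qs j).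
Proof.
move=> _ _ _ _ sgI P Pminimal m Qs Qsprimary Idec Qsirred j radQjP.
apply: (strongly_golod_saturation (Qsprimary j) sgI) => [f /Idec | f Qjf]; first exact.
have [s nPs Isf] := primary_component_saturation Pminimal Qsprimary Idec Qsirred radQjP Qjf.
by exists s => // /radQjP.
Qed.
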